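(* On $V=\mathbb R$ with the standard metric, let $\phi(x)=e^{-1/x^2}$ for $x\neq0$, $\phi(0)=0$, and let $X=f(x)\partial_x$ with $f(x)=\frac{2}{x^3}e^{-1/x^2}$ for $x<0$, $f(0)=0$, $f(x)=\frac{1}{x^3}e^{-1/x^2}$ for $x>0$. Then there exists a continuous function $\delta:\mathbb R\to(0,\infty)$ with $d\phi(X)\ge\delta(|X|^2+|d\phi|^2)$ on $\mathbb R$, but there is no smooth $(2,0)$ tensor field $g$ on $\mathbb R$ with $g(v,v)>0$ for all $v\ne0$ and $d\phi=g(X,\cdot)$. *)

From Stdlib Require Import Reals Lra.
From Coquelicot Require Import Coquelicot.
Open Scope R_scope.

Definition phi (x : R) : R :=
  if Req_EM_T x 0 then 0 else exp (- (1 / x ^ 2)).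

(* coefficient of the vector field X = f(x) d/dx *)
Definition fX (x : R) : R :=
  if Rlt_dec x 0 then 2 / x ^ 3 * exp (- (1 / x ^ 2))
  else if Req_EM_T x 0 then 0
  else 1 / x ^ 3 * exp (- (1 / x ^ 2)).

Definition smooth (g : R -> R) : Prop :=
  forall (n : nat) (x : R), ex_derive_n g n x.

(* A (2,0) tensor field on R is given by its single component G:
   g_x(v, w) = G x * v * w. *)
Definition tensor20 (G : R -> R) (x v w : R) : R := G x * v * w.

(** On both half-lines [phi' = c fX] with [c = 1] for [x < 0] and [c = 2] for
    [x > 0], and [phi'(0) = fX 0 = 0]; since [c f^2 >= (1 + c^2) f^2 / 4] for
    [1 <= c <= 2], the constant [delta = 1/4] works.  A metric [G] with
    [phi' = G fX] would have to equal [c] wherever [fX <> 0], i.e. [1] on the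
    negative and [2] on the positive half-line, so it cannot be continuous at
    [0], let alone smooth. *)
From Stdlib Require Import Reals Lra.
From Coquelicot Require Import Coquelicot.
Open Scope R_scope.

Lemma exp_neg_inv_lt t : 0 < t -> exp (- / t) < t.
Proof.
intros Ht.
assert (Hinv : 0 < / t) by (apply Rinv_0_lt_compat; exact Ht).
assert (Hexp : / t < exp (/ t)) by (pose proof (exp_ineq1 (/ t)); lra).
rewrite exp_Ropp; rewrite <- (Rinv_inv t) at 2.
apply Rinv_lt_contravar; [apply Rmult_lt_0_compat; [exact Hinv|apply exp_pos]|exact Hexp].
Qed.

Lemma is_derive_phi_neq0 x :
  x <> 0 -> is_derive phi x (2 / x ^ 3 * exp (- (1 / x ^ 2))).
Proof.
intros Hx.
apply (is_derive_ext_loc (fun y => exp (- (1 / y ^ 2)))).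
- assert (Hr : 0 < Rabs x) by (apply Rabs_pos_lt; exact Hx).
  exists (mkposreal _ Hr); intros y Hy; unfold phi.
  destruct (Req_EM_T y 0) as [->|]; [|reflexivity].
  exfalso; unfold ball in Hy; simpl in Hy.
  unfold AbsRing_ball, abs, minus, plus, opp in Hy; simpl in Hy.
  rewrite Rplus_0_l, Rabs_Ropp in Hy; lra.
- auto_derive; [intros E; apply Hx; nra|].
  replace (1 * / (x * (x * 1))) with (1 / x ^ 2) by (simpl; field; exact Hx).
  field; exact Hx.
Qed.

(** [phi h / h] is bounded by [h^2 / |h| = |h|] thanks to [exp (-1/h^2) < h^2]. *)
Lemma is_derive_phi_0 : is_derive phi 0 0.
Proof.
apply is_derive_Reals; intros eps Heps; exists (mkposreal _ Heps).
intros h Hh Hlt; simpl in Hlt; rewrite Rplus_0_l.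
unfold phi; destruct (Req_EM_T h 0) as [|_]; [contradiction|].
destruct (Req_EM_T 0 0) as [_|]; [|lra].
assert (Habs : 0 < Rabs h) by (apply Rabs_pos_lt; exact Hh).
assert (Hsq : h ^ 2 = Rabs h * Rabs h)
  by (rewrite <- Rabs_mult, Rabs_pos_eq; simpl; nra).
assert (Hsmall : exp (- (1 / h ^ 2)) < Rabs h * Rabs h).
{ rewrite <- Hsq; unfold Rdiv; rewrite Rmult_1_l.
  apply exp_neg_inv_lt, pow2_gt_0; exact Hh. }
pose proof (exp_pos (- (1 / h ^ 2))) as Hpos.
replace ((exp (- (1 / h ^ 2)) - 0) / h - 0) with (exp (- (1 / h ^ 2)) / h)
  by (field; exact Hh).
unfold Rdiv; rewrite Rabs_mult, Rabs_inv, (Rabs_pos_eq (exp _)) by lra.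
apply (Rmult_lt_reg_r (Rabs h)); [exact Habs|].
rewrite Rmult_assoc, Rinv_l by lra; nra.
Qed.

Lemma fX_lt0 x : x < 0 -> fX x = 2 / x ^ 3 * exp (- (1 / x ^ 2)).
Proof. intros Hx; unfold fX; destruct (Rlt_dec x 0); [reflexivity|lra]. Qed.

Lemma fX_gt0 x : 0 < x -> fX x = 1 / x ^ 3 * exp (- (1 / x ^ 2)).
Proof.
intros Hx; unfold fX; destruct (Rlt_dec x 0); [lra|].
destruct (Req_EM_T x 0); [lra|reflexivity].
Qed.

Lemma fX_0 : fX 0 = 0.
Proof.
unfold fX; destruct (Rlt_dec 0 0); [lra|].
destruct (Req_EM_T 0 0); [reflexivity|lra].
Qed.

Lemma fX_neq0 x : x <> 0 -> fX x <> 0.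
Proof.
intros Hx; assert (Hx3 : x ^ 3 <> 0) by (apply pow_nonzero; exact Hx).
pose proof (exp_pos (- (1 / x ^ 2))) as Hexp.
destruct (Rlt_dec x 0) as [Hlt|Hge];
  [rewrite fX_lt0 | rewrite fX_gt0 by lra]; try exact Hlt;
  unfold Rdiv; repeat apply Rmult_integral_contrapositive_currified;
  try apply Rinv_neq_0_compat; lra.
Qed.

Lemma Derive_phi_lt0 x : x < 0 -> Derive phi x = fX x.
Proof.
intros Hx; rewrite fX_lt0 by exact Hx.
apply is_derive_unique, is_derive_phi_neq0; lra.
Qed.

Lemma Derive_phi_gt0 x : 0 < x -> Derive phi x = 2 * fX x.
Proof.
intros Hx; rewrite fX_gt0 by exact Hx.
rewrite (is_derive_unique _ _ _ (is_derive_phi_neq0 x ltac:(lra))).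
field; lra.
Qed.

Lemma Derive_phi_0 : Derive phi 0 = 0.
Proof. exact (is_derive_unique _ _ _ is_derive_phi_0). Qed.

Lemma Derive_phi_scale x : exists c, 1 <= c <= 2 /\ Derive phi x = c * fX x.
Proof.
destruct (Rtotal_order x 0) as [Hx|[->|Hx]].
- exists 1; rewrite Derive_phi_lt0 by exact Hx; split; lra.
- exists 1; rewrite Derive_phi_0, fX_0; split; lra.
- exists 2; rewrite Derive_phi_gt0 by exact Hx; split; lra.
Qed.

Lemma continuous_eventually_const {F : (R -> Prop) -> Prop} {FF : ProperFilter F}
  (G : R -> R) x0 a :
  filter_le F (locally x0) -> continuous G x0 -> F (fun x => G x = a) -> G x0 = a.
Proof.
intros HF HG Ha.
apply (filterlim_locally_unique (F := F) G).
- exact (filterlim_filter_le_1 G HF HG).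
- apply (filterlim_ext_loc (fun _ => a)); [|apply filterlim_const].
  apply (filter_imp (fun x => G x = a)); [intros x E; symmetry; exact E|exact Ha].
Qed.

Lemma filter_le_at_left_locally x0 : filter_le (at_left x0) (locally x0).
Proof. intros P [d Hd]; exists d; intros y Hy _; apply Hd, Hy. Qed.

Lemma filter_le_at_right_locally x0 : filter_le (at_right x0) (locally x0).
Proof. intros P [d Hd]; exists d; intros y Hy _; apply Hd, Hy. Qed.

Lemma smooth_continuous G x : smooth G -> continuous G x.
Proof. intros HG; exact (ex_derive_continuous G x (HG 1%nat x)). Qed.

Theorem mainTheorem6 :
  (exists delta : R -> R,
      (forall x, continuous delta x) /\
      (forall x, 0 < delta x) /\
      (forall x, Derive phi x * fX x >= delta x * (fX x ^ 2 + Derive phi x ^ 2)))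
  /\
  ~ (exists G : R -> R,
        smooth G /\
        (forall x v, v <> 0 -> tensor20 G x v v > 0) /\
        (forall x v, Derive phi x * v = tensor20 G x (fX x) v)).
Proof.
split.
- exists (fun _ => 1 / 4); split; [intros; apply continuous_const|].
  split; [intros; lra|].
  intros x; destruct (Derive_phi_scale x) as [c [Hc ->]]; nra.
- intros [G [HG [_ Hdual]]].
  assert (HGc : forall x c, x <> 0 -> Derive phi x = c * fX x -> G x = c).
  { intros x c Hx Hd; pose proof (Hdual x 1) as E; unfold tensor20 in E.
    rewrite Hd in E; apply (Rmult_eq_reg_r (fX x)); [lra|exact (fX_neq0 x Hx)]. }
  assert (Hleft : G 0 = 1).
  { apply (continuous_eventually_const (F := at_left 0));
      [apply filter_le_at_left_locally | apply smooth_continuous, HG |].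
    exists (mkposreal 1 Rlt_0_1); intros y _ Hy.
    apply HGc; [lra|rewrite Derive_phi_lt0, Rmult_1_l; [reflexivity|exact Hy]]. }
  assert (Hright : G 0 = 2).
  { apply (continuous_eventually_const (F := at_right 0));
      [apply filter_le_at_right_locally | apply smooth_continuous, HG |].
    exists (mkposreal 1 Rlt_0_1); intros y _ Hy.
    apply HGc; [lra|apply Derive_phi_gt0, Hy]. }
  lra.
Qed.
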